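(* Let $s \ge 2$ and $q \ge 1$ be integers with $2(q-s)^2<s-1$. Then $R(s,q) \le s+2(q-s)+2(q-s)^2$.
   Context: Let $Z_s$ be the ring of integers modulo $s$. A family $\mathcal{F} \subseteq Z_s^q$ is covering if for every ordered pair of distinct vectors $u,v \in \mathcal{F}$ and every $a \in Z_s$ there is a coordinate $i$ with $u_i - v_i = a$. $R(s,q)$ denotes the maximum possible cardinality of a covering family in $Z_s^q$. *)

From mathcomp Require Import all_boot all_order all_algebra.
Set Implicit Arguments. Unset Strict Implicit. Unset Printing Implicit Defensive.
Import GRing.Theory.
Local Open Scope ring_scope.

(* Vectors of Z_s^q: finite functions 'I_q -> 'Z_s  (meaningful for s >= 2). *)
Definition coveringb (s q : nat) (F : {set {ffun 'I_q -> 'Z_s}}) : bool :=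
  [forall u in F, forall v in F, (u != v) ==>
     [forall a : 'Z_s, [exists i : 'I_q, u i - v i == a]]].

Definition R (s q : nat) : nat :=
  \max_(F : {set {ffun 'I_q -> 'Z_s}} | coveringb F) #|F|.

From mathcomp Require Import all_boot all_order all_algebra zify.
Import Order.TTheory GRing.Theory Num.Theory.

(* Double counting.  For distinct u, v in a covering family F the map
   i |-> u_i - v_i is onto Z_s, so the number of pairs (i, j) with
   u_i - v_i = u_j - v_j, a sum of squares of s positive fibre sizes adding up
   to q, is at most (q - s)^2 + 2(q - s) + s; for u = v it is q^2.  Since
   u_i - v_i = u_j - v_j iff u_i - u_j = v_i - v_j, the same count summed over
   F x F is also the sum over (i, j) of the collisions of u |-> u_i - u_j on F,
   each at least |F|^2 / s by Cauchy-Schwarz.  Comparing the two bounds gives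
   |F| (s + d - d^2) <= s (s + 2d) for d = q - s, and 2d^2 < s - 1 turns this
   into |F| <= s + 2d + 2d^2.  When q < s no two vectors are covered. *)

Set Implicit Arguments. Unset Strict Implicit. Unset Printing Implicit Defensive.

Section Collisions.
Variables (I T : finType).
Implicit Types (A : {pred I}) (f : I -> T).

Definition collisions A f : nat := \sum_(u in A) \sum_(v in A) (f u == f v).

Definition fibre_card A f (x : T) : nat := \sum_(u in A) (f u == x).

Lemma sum_fibre_card A f : \sum_x fibre_card A f x = #|A|.
Proof.
rewrite /fibre_card exchange_big /= -sum1_card; apply: eq_bigr => u _.
by rewrite (bigD1 (f u)) //= eqxx big1 // => x /negbTE; rewrite eq_sym => ->.
Qed.

Lemma sum_sqr_fibre_card A f : \sum_x fibre_card A f x ^ 2 = collisions A f.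
Proof.
under eq_bigr => x _ do rewrite expnS expn1 big_distrl /=.
rewrite exchange_big /=; apply: eq_bigr => u _.
under eq_bigr => x _ do rewrite big_distrr /=.
rewrite exchange_big /=; apply: eq_bigr => v _.
rewrite (bigD1 (f u)) //= eqxx mul1n big1 ?addn0 1?eq_sym // => x /negbTE.
by rewrite eq_sym => ->.
Qed.

Lemma sum_sqr_le_sqr_sum (M : T -> nat) : \sum_x M x ^ 2 <= (\sum_x M x) ^ 2.
Proof.
rewrite expnS expn1 big_distrlr /=; apply: leq_sum => x _.
by rewrite (bigD1 x) //= leq_addr.
Qed.

Lemma sqr_sum_le_card_sum_sqr (M : T -> nat) :
  (\sum_x M x) ^ 2 <= #|T| * \sum_x M x ^ 2.
Proof.
rewrite -(leq_pmul2l (isT : 0 < 2)).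
have -> : 2 * (#|T| * \sum_x M x ^ 2) = \sum_x \sum_y (M x ^ 2 + M y ^ 2).
  under [RHS]eq_bigr => x _ do rewrite big_split /= sum_nat_const.
  by rewrite big_split /= sum_nat_const -big_distrr /= mul2n addnn.
rewrite expnS expn1 big_distrlr big_distrr /=.
apply: leq_sum => x _; rewrite big_distrr /=; apply: leq_sum => y _.
exact: nat_Cauchy.
Qed.

Lemma sqr_card_le_collisions A f : #|A| ^ 2 <= #|T| * collisions A f.
Proof.
by rewrite -(sum_fibre_card A f) -sum_sqr_fibre_card sqr_sum_le_card_sum_sqr.
Qed.

Section Surjective.
Variable f : I -> T.
Hypothesis f_surj : forall x, exists u, f u = x.

Local Notation fibre x := (fibre_card predT f x).

Lemma fibre_card_gt0 x : 0 < fibre x.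
Proof. by have [u <-] := f_surj x; rewrite /fibre_card (bigD1 u) //= eqxx. Qed.

Lemma sum_predn_fibre_card : \sum_x (fibre x).-1 + #|T| = #|I|.
Proof.
rewrite -sum1_card -big_split -(sum_fibre_card predT f) /=; apply: eq_bigr => x _.
by rewrite addn1 prednK // fibre_card_gt0.
Qed.

Lemma leq_card_surj : #|T| <= #|I|.
Proof. by rewrite -sum_predn_fibre_card leq_addl. Qed.

Lemma collisions_le_surj :
  collisions predT f <= (#|I| - #|T|) ^ 2 + 2 * (#|I| - #|T|) + #|T|.
Proof.
rewrite -sum_predn_fibre_card addnK -sum_sqr_fibre_card.
have -> : \sum_x fibre x ^ 2
          = \sum_x (fibre x).-1 ^ 2 + 2 * \sum_x (fibre x).-1 + #|T|.
  rewrite -sum1_card big_distrr -!big_split /=; apply: eq_bigr => x _.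
  by have := fibre_card_gt0 x; nia.
by rewrite !leq_add2r sum_sqr_le_sqr_sum.
Qed.
End Surjective.
End Collisions.

Lemma sum_pairs_le (T : finType) (A : {pred T}) (c : T -> T -> nat) (K B : nat) :
  (forall u, c u u <= K) -> {in A &, forall u v, u != v -> c u v <= B} ->
  \sum_(u in A) \sum_(v in A) c u v <= #|A| * (K + #|A|.-1 * B).
Proof.
move=> cK cB; rewrite -sum_nat_const; apply: leq_sum => u uA.
rewrite (bigD1 u) //= leq_add // (cardD1 u) uA add1n /= -sum_nat_const.
apply: (@leq_trans (\sum_(v in A | v != u) B)).
  by apply: leq_sum => v /andP[vA vu]; rewrite cB // eq_sym.
by apply/eq_leq/eq_bigl => v; rewrite !inE andbC.
Qed.

Local Open Scope ring_scope.

Lemma eq_subrC (V : zmodType) (a b c d : V) : (a - b == c - d) = (a - c == b - d).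
Proof. by rewrite !subr_eq addrAC [b - d + c]addrAC [c + b]addrC. Qed.

Lemma double_count_bound (s q m : int) :
  2 * (q - s) ^+ 2 < s - 1 -> s <= q -> 0 < m ->
  q * (q - 1 + s) * m <= s * (q ^+ 2 + (m - 1) * ((q - s) ^+ 2 + 2 * (q - s) + s)) ->
  m <= s + 2 * (q - s) + 2 * (q - s) ^+ 2.
Proof.
move: (q - s) (subrKC s q) => d <- hd; rewrite lerDl => d_ge0 m_gt0 H.
have s1_gt0 : 0 < s - 1 by nia.
have k_gt0 : 0 < s + d - d ^+ 2 by nia.
(* [H] is this inequality multiplied by [s - 1], after expansion. *)
have mk : m * (s + d - d ^+ 2) <= s * (s + 2 * d).
  by rewrite -(ler_pM2l s1_gt0); lia.
have sk : s * (s + 2 * d) <= (s + 2 * d + 2 * d ^+ 2) * (s + d - d ^+ 2).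
  have : 0 <= d * (s - 1 - 2 * d ^+ 2) by apply: mulr_ge0; lia.
  nia.
by rewrite -(ler_pM2r k_gt0); apply: le_trans mk sk.
Qed.

Section Covering.
Variables s q : nat.
Hypothesis s_gt1 : (1 < s)%N.
Implicit Types (F : {set {ffun 'I_q -> 'Z_s}}) (u v : {ffun 'I_q -> 'Z_s}).

Lemma card_Zs : #|'Z_s| = s.
Proof. by rewrite card_ord Zp_cast. Qed.

Lemma covering_diff_surj F : coveringb F ->
  {in F &, forall u v, u != v -> forall a, exists i, u i - v i = a}.
Proof.
move=> /forall_inP covF u v uF vF uv a.
have /forall_inP/(_ v vF)/implyP/(_ uv)/forallP/(_ a)/existsP[i /eqP] := covF u uF.
by exists i.
Qed.

Definition coincidences u v := collisions predT (fun i : 'I_q => u i - v i).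

Lemma coincidencesxx u : coincidences u u = (q ^ 2)%N.
Proof.
rewrite /coincidences /collisions.
under eq_bigr => i _ do under eq_bigr => j _ do rewrite !subrr eqxx.
by rewrite !sum_nat_const card_ord muln1.
Qed.

Section CoveringPair.
Variables (F : {set {ffun 'I_q -> 'Z_s}}) (u v : {ffun 'I_q -> 'Z_s}).
Hypotheses (covF : coveringb F) (uF : u \in F) (vF : v \in F) (uv : u != v).

Lemma covering_pair_s_le_q : (s <= q)%N.
Proof.
have := leq_card_surj (covering_diff_surj covF uF vF uv).
by rewrite card_Zs card_ord.
Qed.

Lemma coincidences_le_covering : (coincidences u v <= (q - s) ^ 2 + 2 * (q - s) + s)%N.
Proof.
have := collisions_le_surj (covering_diff_surj covF uF vF uv).
by rewrite card_Zs card_ord.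
Qed.

End CoveringPair.

Lemma sum_coincidences_ge F :
  (q * (q.-1 + s) * #|F| ^ 2 <= s * \sum_(u in F) \sum_(v in F) coincidences u v)%N.
Proof.
pose C i j := collisions (mem F) (fun u : {ffun 'I_q -> 'Z_s} => u i - u j).
have -> : (\sum_(u in F) \sum_(v in F) coincidences u v = \sum_i \sum_j C i j)%N.
  rewrite /C /coincidences /collisions.
  under eq_bigr => u _ do rewrite exchange_big /=.
  rewrite exchange_big /=; apply: eq_bigr => i _.
  under eq_bigr => u _ do rewrite exchange_big /=.
  rewrite exchange_big /=; apply: eq_bigr => j _.
  by apply: eq_bigr => u _; apply: eq_bigr => v _; rewrite eq_subrC.
rewrite -mulnA -{1}[q]card_ord -sum_nat_const big_distrr /=.
apply: leq_sum => i _; rewrite (bigD1 i) //= mulnDr mulnDl addnC leq_add //.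
  rewrite leq_mul2l /C /collisions; apply/orP; right.
  under eq_bigr => u _ do under eq_bigr => v _ do rewrite !subrr eqxx.
  by rewrite !sum_nat_const muln1 mulnn.
apply: (@leq_trans (\sum_(j | j != i) #|F| ^ 2)).
  by rewrite (eq_bigl (fun j => j \in predC1 i)) // sum_nat_const cardC1 card_ord.
rewrite big_distrr /=; apply: leq_sum => j _.
have := sqr_card_le_collisions (mem F) (fun u : {ffun 'I_q -> 'Z_s} => u i - u j).
by rewrite card_Zs.
Qed.

Lemma card_covering_le F : coveringb F ->
  2 * (q%:Z - s%:Z) ^+ 2 < s%:Z - 1 ->
  #|F|%:Z <= s%:Z + 2 * (q%:Z - s%:Z) + 2 * (q%:Z - s%:Z) ^+ 2.
Proof.
move=> covF hd.
have [F_le1 | /card_gt1P[u [v [uF vF uv]]]] := leqP #|F| 1; first nia.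
have s_le_q := covering_pair_s_le_q covF uF vF uv.
have m_gt0 : (0 < #|F|)%N by apply/card_gt0P; exists u.
pose b := ((q - s) ^ 2 + 2 * (q - s) + s)%N.
have total := sum_pairs_le (fun w => eq_leq (coincidencesxx w))
  (fun w w' wF w'F => coincidences_le_covering covF wF w'F).
have counts : (q * (q.-1 + s) * #|F| <= s * (q ^ 2 + #|F|.-1 * b))%N.
  rewrite -(leq_pmul2l m_gt0).
  apply: leq_trans (leq_trans (eq_leq _) (sum_coincidences_ge F))
                   (leq_trans (leq_mul (leqnn s) total) (eq_leq _)).
    by rewrite mulnCA mulnn.
  by rewrite mulnCA.
have q_gt0 : (0 < q)%N := leq_trans (ltnW s_gt1) s_le_q.
apply: double_count_bound hd _ _ _; rewrite ?lez_nat ?ltz_nat // !expr2.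
move: counts; rewrite /b -!mulnn -lez_nat !(PoszM, PoszD).
by rewrite (predn_int q_gt0) (predn_int m_gt0) -subzn.
Qed.

End Covering.

Theorem proposition4p2 (s q : nat) :
  (2 <= s)%N -> (1 <= q)%N ->
  2 * ((q%:Z - s%:Z) ^+ 2) < s%:Z - 1 ->
  (R s q)%:Z <= s%:Z + 2 * (q%:Z - s%:Z) + 2 * ((q%:Z - s%:Z) ^+ 2).
Proof.
move=> s_gt1 _ hd; rewrite /R.
have covering0 : (0 < #|@coveringb s q|)%N.
  by apply/card_gt0P; exists set0; apply/forall_inP => u; rewrite inE.
have [F covF ->] := eq_bigmax_cond (fun F : {set {ffun 'I_q -> 'Z_s}} => #|F|) covering0.
exact: card_covering_le.
Qed.
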